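(* Let $k$ be an infinite field, $n\ge2$, and let $<$ be a product order on $k[X_1,\ldots,X_n]$ with $X_1<\cdots<X_n$. Let $A\subseteq k^n$ be a finite union of pairwise distinct affine $d$-planes such that for each irreducible component $A'$ of $A$, the index $1$ is not among the indices of the minimal free variables of $A'$ (equivalently, $X_1$ is constant on each component). Let $Y=\{a_1;\ a\in A\}\subseteq k$ (a finite set), and for $\lambda\in Y$ let $A_\lambda=\{a'\in k^{n-1};\ (\lambda,a')\in A\}$ and $D(A_\lambda)\subseteq\mathbb{N}^{n-1}$ its standard set with respect to the restriction of $<$ to $k[X_2,\ldots,X_n]$, identified with $\{0\}\times D(A_\lambda)\subseteq\mathbb{N}^n$. Then $$D(A)=\sum_{\lambda\in Y}D(A_\lambda),$$ i.e. $D(A)=\{\beta\in\mathbb{N}^n;\ \beta_1<\#\{\lambda\in Y;\ p(\beta)\in D(A_\lambda)\}\}$.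
   Context: $p:\mathbb{N}^n\to\mathbb{N}^{n-1}$, $(\alpha_1,\ldots,\alpha_n)\mapsto(\alpha_2,\ldots,\alpha_n)$. A term order $<$ on $k[X_1,\ldots,X_n]$ is a product order if for all $\alpha,\beta\in\mathbb{N}^n$: $\alpha<\beta$ iff either $p(\alpha)<p(\beta)$, or $p(\alpha)=p(\beta)$ and $\alpha_1<\beta_1$. For $A\subseteq k^m$, $I(A)$ is the ideal of polynomials vanishing on $A$, ${\rm LE}(f)$ the leading exponent, $C(A)=\{{\rm LE}(f);\ 0\ne f\in I(A)\}$, and $D(A)=\mathbb{N}^m\setminus C(A)$. Addition of standard sets: let $\overline{\mathbb{D}}_n$ be the set of subsets $\delta\subseteq\mathbb{N}^n$ whose complement is closed under adding elements of $\mathbb{N}^n$ and which do not contain $\mathbb{N}e_1$; for $\delta,\delta'\in\overline{\mathbb{D}}_n$, $\delta+\delta'=\{\beta\in\mathbb{N}^n;\ p(\beta)\in p(\delta)\cup p(\delta'),\ \beta_1<\#(p^{-1}(p(\beta))\cap\delta)+\#(p^{-1}(p(\beta))\cap\delta')\}$; this is commutative and associative, so finite sums are defined; for sets of the form $\{0\}\times\epsilon_\lambda$ the finite sum equals $\{\beta;\ \beta_1<\#\{\lambda;\ p(\beta)\in\epsilon_\lambda\}\}$. An affine $d$-plane is a translate of a $d$-dimensional linear subspace; for $\#J=d$, $\{X_j;\ j\in J\}$ is a set of free variables of an affine $d$-plane $A'$ if the projection $A'\to k^J$ is bijective, and minimal if moreover no exchange of some $j\in J$ by some $i\notin J$ with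 $i<j$ yields a set of free variables. *)

From HB Require Import structures.
From mathcomp Require Import all_boot all_order all_algebra.
Set Implicit Arguments. Unset Strict Implicit. Unset Printing Implicit Defensive.
Import GRing.Theory.
Local Open Scope ring_scope.

Definition expo (m : nat) := {ffun 'I_m -> nat}.

Definition eadd m (a b : expo m) : expo m := [ffun i => (a i + b i)%N].
Definition eunit m (i : 'I_m) : expo m := [ffun j => nat_of_bool (j == i)].

Definition proj n (a : expo n.+1) : expo n := [ffun i : 'I_n => a (lift ord0 i)].
Definition cons0 n (g : expo n) : expo n.+1 :=
  [ffun i => if unlift ord0 i is Some j then g j else 0%N].

Definition term_order m (lt : rel (expo m)) : Prop :=
  [/\ irreflexive lt, transitive lt,
      (forall a b, a != b -> lt a b || lt b a),
      (forall a b c, lt a b -> lt (eadd a c) (eadd b c))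
    & well_founded (fun a b => lt a b)].

Definition restr n (lt : rel (expo n.+1)) : rel (expo n) :=
  fun g h => lt (cons0 g) (cons0 h).

Definition product_order n (lt : rel (expo n.+1)) : Prop :=
  forall a b, lt a b = restr lt (proj a) (proj b) || ((proj a == proj b) && (a ord0 < b ord0)%N).

Record mpoly (K : fieldType) (m : nat) := MPoly {
  coef : expo m -> K;
  supp : seq (expo m);
  supp_ok : forall a, coef a != 0 -> a \in supp }.

Definition meval (K : fieldType) m (f : mpoly K m) (x : 'rV[K]_m) : K :=
  \sum_(a <- undup (supp f)) coef f a * \prod_(i < m) x 0 i ^+ a i.

Definition mpoly_nonzero (K : fieldType) m (f : mpoly K m) := exists a, coef f a != 0.

Definition is_LE (K : fieldType) m (lt : rel (expo m)) (f : mpoly K m) (b : expo m) :=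
  coef f b != 0 /\ forall a, coef f a != 0 -> a = b \/ lt a b.

Definition vanishes (K : fieldType) m (f : mpoly K m) (A : 'rV[K]_m -> Prop) :=
  forall x, A x -> meval f x = 0.

Definition Cset (K : fieldType) m (lt : rel (expo m)) (A : 'rV[K]_m -> Prop) (b : expo m) :=
  exists f : mpoly K m, [/\ mpoly_nonzero f, vanishes f A & is_LE lt f b].
Definition Dset (K : fieldType) m (lt : rel (expo m)) (A : 'rV[K]_m -> Prop) (b : expo m) :=
  ~ Cset lt A b.

(** Affine d-plane {a + u B}, B of full row rank d. *)
Definition in_plane (K : fieldType) m d (a : 'rV[K]_m) (B : 'M[K]_(d, m)) (x : 'rV[K]_m) :=
  exists u : 'rV[K]_d, x = a + u *m B.

Definition free_vars (K : fieldType) m d (a : 'rV[K]_m) (B : 'M[K]_(d, m)) (J : {set 'I_m}) :=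
  #|J| = d /\
  forall y : 'rV[K]_m, exists! x, in_plane a B x /\ forall j, j \in J -> x 0 j = y 0 j.

Definition min_free_vars (K : fieldType) m d (a : 'rV[K]_m) (B : 'M[K]_(d, m)) (J : {set 'I_m}) :=
  free_vars a B J /\
  forall j i : 'I_m, j \in J -> i \notin J -> (i < j)%N -> ~ free_vars a B ((J :\ j) :|: [set i]).

Definition cons_pt (K : fieldType) n (l : K) (x : 'rV[K]_n) : 'rV[K]_n.+1 :=
  \row_i (if unlift ord0 i is Some j then x 0 j else l).

Definition fiber (K : fieldType) n (A : 'rV[K]_n.+1 -> Prop) (l : K) : 'rV[K]_n -> Prop :=
  fun x => A (cons_pt l x).

Definition card_prop (T : eqType) (P : T -> Prop) (N : nat) :=
  exists t : seq T, [/\ uniq t, (forall x, x \in t <-> P x) & size t = N].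

From Stdlib Require Import Classical.
From HB Require Import structures.
From mathcomp Require Import all_boot all_order all_algebra.
Set Implicit Arguments. Unset Strict Implicit. Unset Printing Implicit Defensive.
Import GRing.Theory.
Local Open Scope ring_scope.

(* Write beta = (b, gamma) with b = beta_1 and gamma = p(beta), and let N be the
   number of first coordinates lambda of A with gamma in D(A_lambda).  For a
   product order, beta in D(A) iff b < N; we prove both inequalities.
   - If f in I(A) has leading exponent beta, then the univariate polynomial
     c(X_1) = sum_{j <= b} coef_f(j, gamma) X_1^j is nonzero of degree <= b, and
     specialising f at X_1 = lambda shows c(lambda) = 0 whenever gamma lies in
     D(A_lambda); hence N <= b ([Cset_count_bound]).
   - Conversely, if N <= b, let M be the counted lambdas, R the other first
     coordinates, g_lambda in I(A_lambda) with leading exponent gamma (monic),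
     L_lambda the Lagrange basis of R and u = X_1^(b - N) prod_{mu in M} (X_1 - mu).
     Then u X^gamma + sum_{lambda in R} u L_lambda (g_lambda - X^gamma) lies in
     I(A) with leading exponent beta ([Cset_of_count_bound]).
   Both directions only use that the first coordinates of A take finitely many
   values ([Dset_fibres]).  The geometric input is that a plane none of whose
   minimal sets of free variables contains X_1 lies in a hyperplane X_1 = const
   ([plane_first_col0]), proved by Steinitz exchange on the index sum of the
   sets of free variables. *)

Section PolyToolkit.
Variable K : fieldType.

Definition mono m (a : expo m) (x : 'rV[K]_m) : K := \prod_(i < m) x 0 i ^+ a i.

Lemma sum_over_support (T : eqType) (F : T -> K) (P : pred T) (s1 s2 : seq T) :
  uniq s1 -> uniq s2 -> {subset P <= s1} -> {subset P <= s2} ->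
  (forall a, ~~ P a -> F a = 0) -> \sum_(a <- s1) F a = \sum_(a <- s2) F a.
Proof.
move=> u1 u2 h1 h2 h0.
have restrictP s : \sum_(a <- s) F a = \sum_(a <- s | P a) F a.
  by rewrite [RHS]big_mkcond; apply: eq_bigr => a _; case: ifP => // /negbT /h0.
rewrite restrictP [RHS]restrictP -big_filter -[RHS]big_filter.
apply: perm_big; apply: uniq_perm; rewrite ?filter_uniq // => a.
by rewrite !mem_filter; case Pa: (P a); rewrite //= (h1 _ Pa) (h2 _ Pa).
Qed.

Lemma mevalE m (f : mpoly K m) x :
  meval f x = \sum_(a <- undup (supp f)) coef f a * mono a x.
Proof. by []. Qed.

Lemma meval_cover m (f : mpoly K m) (s : seq (expo m)) x :
  uniq s -> (forall a, coef f a != 0 -> a \in s) ->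
  meval f x = \sum_(a <- s) coef f a * mono a x.
Proof.
move=> us hs; apply: (sum_over_support (P := fun a => coef f a != 0)) => //.
- exact: undup_uniq.
- by move=> a /supp_ok; rewrite mem_undup.
- by move=> a; rewrite negbK => /eqP ->; rewrite mul0r.
Qed.

Lemma sum_neq0 (T : eqType) (r : seq T) (P : pred T) (F : T -> K) :
  \sum_(i <- r | P i) F i != 0 -> exists i, [/\ i \in r, P i & F i != 0].
Proof.
move=> h; apply: NNPP => hn; move/negP: h; apply; apply/eqP; apply: big1_seq.
move=> i /andP[Pi ir]; apply/eqP; apply: contraT => Fi; case: hn; by exists i.
Qed.

Definition conse n (j : nat) (d : expo n) : expo n.+1 :=
  [ffun i => if unlift ord0 i is Some k then d k else j].

Lemma conse0 n j (d : expo n) : conse j d ord0 = j.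
Proof. by rewrite ffunE unlift_none. Qed.

Lemma proj_conse n j (d : expo n) : proj (conse j d) = d.
Proof. by apply/ffunP=> i; rewrite !ffunE liftK. Qed.

Lemma conse_eta n (a : expo n.+1) : conse (a ord0) (proj a) = a.
Proof. by apply/ffunP=> i; rewrite ffunE; case: unliftP => [k ->|->]; rewrite ?ffunE. Qed.

Lemma conse_inj n j j' (d d' : expo n) : conse j d = conse j' d' -> j = j' /\ d = d'.
Proof.
move=> h; split; first by rewrite -(conse0 j d) h conse0.
by rewrite -(proj_conse j d) h proj_conse.
Qed.

Lemma mono_cons n (a : expo n.+1) (t : K) (x : 'rV[K]_n) :
  mono a (cons_pt t x) = t ^+ a ord0 * mono (proj a) x.
Proof.
rewrite /mono big_ord_recl !mxE unlift_none; congr (_ * _).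
by apply: eq_bigr => i _; rewrite !mxE liftK ffunE.
Qed.

Lemma cons_pt_eta n (x : 'rV[K]_n.+1) : cons_pt (x 0 ord0) (\row_i x 0 (lift ord0 i)) = x.
Proof. by apply/rowP => i; rewrite !mxE; case: unliftP => [j ->|->]; rewrite ?mxE. Qed.

Lemma madd_ok m (f g : mpoly K m) a :
  coef f a + coef g a != 0 -> a \in supp f ++ supp g.
Proof.
rewrite mem_cat; case: (eqVneq (coef f a) 0) => [->|/supp_ok -> //].
by rewrite add0r => /supp_ok ->; rewrite orbT.
Qed.
Definition madd m (f g : mpoly K m) : mpoly K m :=
  MPoly (@madd_ok m f g).

Lemma mzero_ok m (a : expo m) : (0 : K) != 0 -> a \in [::].
Proof. by rewrite eqxx. Qed.
Definition mzero m : mpoly K m := MPoly (@mzero_ok m).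

Lemma mscale_ok m (c : K) (f : mpoly K m) a : c * coef f a != 0 -> a \in supp f.
Proof. by rewrite mulf_eq0 negb_or => /andP[_ /supp_ok]. Qed.
Definition mscale m (c : K) (f : mpoly K m) : mpoly K m := MPoly (@mscale_ok m c f).

Lemma mmono_ok m (g : expo m) a : ((a == g)%:R : K) != 0 -> a \in [:: g].
Proof. by move=> h; rewrite inE; apply: contraR h => /negbTE ->; rewrite mulr0n eqxx. Qed.
Definition mmono m (g : expo m) : mpoly K m := MPoly (@mmono_ok m g).

Definition msum m (l : seq (mpoly K m)) : mpoly K m := foldr (@madd m) (@mzero m) l.

Lemma coef_msum m (l : seq (mpoly K m)) a : coef (msum l) a = \sum_(f <- l) coef f a.
Proof. by elim: l => [|f l IH]; rewrite ?big_nil ?big_cons //= IH. Qed.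

Lemma meval_add m (f g : mpoly K m) x : meval (madd f g) x = meval f x + meval g x.
Proof.
pose s := undup (supp f ++ supp g).
have cover (h : mpoly K m) : (forall a, coef h a != 0 -> a \in supp f ++ supp g) ->
    meval h x = \sum_(a <- s) coef h a * mono a x.
  by move=> hh; apply: meval_cover; rewrite ?undup_uniq // => a /hh; rewrite mem_undup.
rewrite (cover (madd f g)); last exact: supp_ok.
rewrite (cover f); last by move=> a /supp_ok; rewrite mem_cat => ->.
rewrite (cover g); last by move=> a /supp_ok; rewrite mem_cat orbC => ->.
by rewrite -big_split /=; apply: eq_bigr => a _; rewrite mulrDl.
Qed.

Lemma meval_msum m (l : seq (mpoly K m)) x :
  meval (msum l) x = \sum_(f <- l) meval f x.
Proof.
elim: l => [|f l IH]; first by rewrite big_nil /meval big_nil.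
by rewrite big_cons /= meval_add IH.
Qed.

Lemma meval_scale m c (f : mpoly K m) x : meval (mscale c f) x = c * meval f x.
Proof. by rewrite /meval /= big_distrr; apply: eq_bigr => a _; rewrite /= mulrA. Qed.

Lemma meval_mono m (g : expo m) x : meval (mmono g) x = mono g x.
Proof. by rewrite /meval /= big_cons big_nil eqxx mul1r addr0. Qed.

(* P(X_1) * h(X_2, ..., X_n+1) for a univariate P. *)
Lemma mtensor_ok n (P : {poly K}) (h : mpoly K n) (a : expo n.+1) :
  P`_(a ord0) * coef h (proj a) != 0 ->
  a \in [seq conse j d | j <- iota 0 (size P), d <- undup (supp h)].
Proof.
rewrite mulf_eq0 negb_or => /andP[hP /supp_ok hh].
rewrite -(conse_eta a); apply: allpairs_f; last by rewrite mem_undup.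
rewrite mem_iota add0n /=; apply: contraR hP; rewrite -leqNgt => hs.
by rewrite nth_default.
Qed.
Definition mtensor n (P : {poly K}) (h : mpoly K n) : mpoly K n.+1 :=
  MPoly (@mtensor_ok n P h).

Lemma meval_tensor n (P : {poly K}) (h : mpoly K n) t x :
  meval (mtensor P h) (cons_pt t x) = P.[t] * meval h x.
Proof.
rewrite (meval_cover _ (s := [seq conse j d | j <- iota 0 (size P), d <- undup (supp h)]));
  last 2 first.
- apply: allpairs_uniq; rewrite ?iota_uniq ?undup_uniq //.
  by move=> [j d] [j' d'] _ _ /= /conse_inj [-> ->].
- exact: supp_ok.
have -> : iota 0 (size P) = index_iota 0 (size P) by rewrite /index_iota subn0.
rewrite big_allpairs_dep /= horner_coef big_distrl /= big_mkord.
apply: eq_bigr => j _; rewrite /meval big_distrr /=; apply: eq_bigr => d _.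
by rewrite mono_cons conse0 proj_conse mulrACA.
Qed.

(* The specialisation f(t, X_2, ..., X_n+1). *)
Definition slice_coef n (f : mpoly K n.+1) (t : K) (d : expo n) : K :=
  \sum_(a <- undup (supp f) | proj a == d) coef f a * t ^+ a ord0.

Lemma mslice_ok n (f : mpoly K n.+1) (t : K) (d : expo n) :
  slice_coef f t d != 0 -> d \in map (@proj n) (supp f).
Proof. by move=> /sum_neq0 [a [ain /eqP <- _]]; apply: map_f; rewrite -mem_undup. Qed.
Definition mslice n (f : mpoly K n.+1) (t : K) : mpoly K n := MPoly (@mslice_ok n f t).

Lemma meval_slice n (f : mpoly K n.+1) (t : K) x :
  meval (mslice f t) x = meval f (cons_pt t x).
Proof.
rewrite !mevalE /= /slice_coef.
under eq_bigr => d _ do rewrite big_distrl big_mkcond /=.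
rewrite exchange_big /=; apply: eq_big_seq => a aS.
have ain : proj a \in undup (map (@proj n) (supp f)).
  by rewrite mem_undup; apply: map_f; rewrite -mem_undup.
rewrite (bigD1_seq (proj a)) ?undup_uniq //= eqxx big1 ?addr0.
  by rewrite mono_cons mulrA.
by move=> d /negbTE; rewrite eq_sym => ->.
Qed.

Lemma seq_choice (T : eqType) (U : Type) (P : T -> U -> Prop) (u0 : U) (s : seq T) :
  (forall x, x \in s -> exists y, P x y) -> exists F, forall x, x \in s -> P x (F x).
Proof.
elim: s => [|x s IH] h; first by exists (fun _ => u0).
have [F HF] := IH (fun y ys => h y (mem_behead (s := x :: s) ys)).
have [y Py] := h x (mem_head x s).
exists (fun z => if z == x then y else F z) => z; rewrite inE.
by case: eqP => [-> //|_ /= zs]; apply: HF.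
Qed.

End PolyToolkit.

Section CountBound.
Variables (K : fieldType) (n : nat) (lt : rel (expo n.+1)).
Hypothesis lt_prod : product_order lt.

Definition column_poly (f : mpoly K n.+1) (b : nat) (g : expo n) : {poly K} :=
  \poly_(j < b.+1) coef f (conse j g).

Lemma slice_coef_column_poly (f : mpoly K n.+1) b g t :
  (forall j, coef f (conse j g) != 0 -> (j <= b)%N) ->
  coef (mslice f t) g = (column_poly f b g).[t].
Proof.
move=> hb; rewrite horner_poly /= /slice_coef.
pose G j := coef f (conse j g) * t ^+ j.
transitivity (\sum_(a <- [seq x <- undup (supp f) | proj x == g]) G (a ord0)).
  rewrite -[LHS]big_filter; apply: eq_big_seq => a; rewrite mem_filter => /andP[/eqP pa _].
  by rewrite /G -{1}(conse_eta a) pa.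
rewrite -(big_map (fun a : expo n.+1 => a ord0) xpredT).
have -> : \sum_(i < b.+1) coef f (conse i g) * t ^+ i = \sum_(j <- iota 0 b.+1) G j.
  by rewrite -(big_mkord xpredT (fun j => G j)) /index_iota subn0.
apply: (sum_over_support (P := fun j => coef f (conse j g) != 0)).
- rewrite map_inj_in_uniq ?filter_uniq ?undup_uniq //.
  move=> a c; rewrite !mem_filter => /andP[/eqP pa _] /andP[/eqP pc _] e.
  by rewrite -(conse_eta a) -(conse_eta c) e pa pc.
- exact: iota_uniq.
- move=> j hj; apply/mapP; exists (conse j g); last by rewrite conse0.
  by rewrite mem_filter proj_conse eqxx mem_undup; apply: supp_ok.
- by move=> j /hb hj; rewrite mem_iota add0n ltnS.
- by move=> j; rewrite negbK /G => /eqP ->; rewrite mul0r.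
Qed.

Lemma LE_first_bound (f : mpoly K n.+1) beta : irreflexive lt -> is_LE lt f beta ->
  forall j, coef f (conse j (proj beta)) != 0 -> (j <= beta ord0)%N.
Proof.
move=> irr [_ fle] j /fle [<-|]; first by rewrite conse0.
by rewrite lt_prod proj_conse conse0 /restr irr eqxx => /ltnW.
Qed.

Lemma slice_LE (f : mpoly K n.+1) beta t :
  is_LE lt f beta -> coef (mslice f t) (proj beta) != 0 ->
  is_LE (restr lt) (mslice f t) (proj beta).
Proof.
move=> [_ fle] nz; split=> // d /sum_neq0 [a [_ /eqP <-]].
rewrite mulf_eq0 negb_or => /andP[/fle [->|la] _]; first by left.
by move: la; rewrite lt_prod => /orP[->|/andP[/eqP ->]]; [right|left].
Qed.

(* If beta lies in C(A), at most beta_1 values lambda have p(beta) in D(A_lambda):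
   they are roots of the nonzero polynomial [column_poly f beta_1 p(beta)]. *)
Lemma Cset_count_bound (A : 'rV[K]_n.+1 -> Prop) beta (s : seq K) :
  irreflexive lt -> Cset lt A beta -> uniq s ->
  (forall l, l \in s -> Dset (restr lt) (fiber A l) (proj beta)) ->
  (size s <= beta ord0)%N.
Proof.
move=> irr [f [_ fA fLE]] us hs.
set c := column_poly f (beta ord0) (proj beta).
have hb := LE_first_bound irr fLE.
have c_neq0 : c != 0.
  apply: contraNneq (proj1 fLE) => c0.
  have := congr1 (fun p : {poly K} => p`_(beta ord0)) c0.
  by rewrite coef_poly ltnSn conse_eta coef0 => ->.
have roots : all (root c) s.
  apply/allP => l ls; apply: contraT => cl; case: (hs l ls).
  have nz : coef (mslice f l) (proj beta) != 0 by rewrite (slice_coef_column_poly _ hb).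
  exists (mslice f l); split; [by exists (proj beta) | | exact: slice_LE].
  by move=> x hx; rewrite meval_slice; apply: fA.
have := max_poly_roots c_neq0 roots us.
by move/leq_trans => /(_ _ (size_poly _ _)); rewrite ltnS.
Qed.

End CountBound.

Section Interpolation.
Variable K : fieldType.

Definition lagrange_basis (R : seq K) (l : K) : {poly K} :=
  (\prod_(m <- R | m != l) ('X - m%:P)) * ((\prod_(m <- R | m != l) (l - m))^-1)%:P.

Lemma lagrange_basisE (R : seq K) l l' : uniq R -> l \in R -> l' \in R ->
  (lagrange_basis R l).[l'] = (l' == l)%:R.
Proof.
move=> uR lR l'R; rewrite hornerM hornerC horner_prod.
under eq_bigr do rewrite hornerXsubC.
case: eqP => [-> | ne].
  rewrite mulfV // prodf_seq_neq0; apply/allP => m _; apply/implyP.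
  by rewrite subr_eq0 eq_sym.
rewrite -big_filter (bigD1_seq l') ?filter_uniq ?mem_filter //=.
  by rewrite subrr !mul0r.
by rewrite l'R andbT; apply/eqP.
Qed.

Definition vanishing_poly (M : seq K) (b : nat) : {poly K} :=
  'X^(b - size M) * \prod_(m <- M) ('X - m%:P).

Lemma vanishing_poly_size (M : seq K) b : (size M <= b)%N ->
  size (vanishing_poly M b) = b.+1.
Proof.
move=> hM; rewrite size_Mmonic ?monic_prod_XsubC ?size_polyXn ?size_prod_XsubC //.
  by rewrite addSn addnS /= subnK.
by rewrite monic_neq0 ?monicXn.
Qed.

Lemma vanishing_poly_lead (M : seq K) b : (size M <= b)%N -> (vanishing_poly M b)`_b = 1.
Proof.
move=> hM; have /monicP : vanishing_poly M b \is monic.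
  by rewrite monicMl ?monicXn ?monic_prod_XsubC.
by rewrite lead_coefE vanishing_poly_size.
Qed.

Lemma vanishing_poly_root (M : seq K) b l : l \in M -> (vanishing_poly M b).[l] = 0.
Proof. by move=> lM; rewrite hornerM; move: (root_prod_XsubC M l); rewrite lM => /eqP ->; rewrite mulr0. Qed.

Variables (n : nat) (lt : rel (expo n.+1)) (A : 'rV[K]_n.+1 -> Prop) (beta : expo n.+1).
Variables (M R : seq K) (G : K -> mpoly K n).
Hypothesis lt_prod : product_order lt.
Hypothesis uR : uniq R.
Hypothesis first_coords : forall x, A x -> x 0 ord0 \in M \/ x 0 ord0 \in R.
Hypothesis size_M : (size M <= beta ord0)%N.
Hypothesis G_fibre : forall l, l \in R ->
  [/\ vanishes (G l) (fiber A l), is_LE (restr lt) (G l) (proj beta) & coef (G l) (proj beta) = 1].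

Definition interpolant : mpoly K n.+1 :=
  let u := vanishing_poly M (beta ord0) in
  madd (mtensor u (mmono K (proj beta)))
    (msum [seq mtensor (u * lagrange_basis R l) (madd (G l) (mscale (-1) (mmono K (proj beta))))
          | l <- R]).

Lemma coef_interpolant a : coef interpolant a =
  (vanishing_poly M (beta ord0))`_(a ord0) * (proj a == proj beta)%:R +
  \sum_(l <- R) (vanishing_poly M (beta ord0) * lagrange_basis R l)`_(a ord0) *
     (coef (G l) (proj a) + -1 * (proj a == proj beta)%:R).
Proof. by rewrite /= coef_msum big_map. Qed.

Lemma coef_interpolant_column a : proj a = proj beta ->
  coef interpolant a = (vanishing_poly M (beta ord0))`_(a ord0).
Proof.
move=> pa; rewrite coef_interpolant pa eqxx mulr1 big1_seq ?addr0 // => l /andP[_ lR].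
by have [_ _ ->] := G_fibre lR; rewrite mulN1r subrr mulr0.
Qed.

Lemma interpolant_vanishes : vanishes interpolant A.
Proof.
move=> x Ax; rewrite -(cons_pt_eta x).
set lam := x 0 ord0; set x' := \row_i x 0 (lift ord0 i).
have fx : fiber A lam x' by rewrite /fiber cons_pt_eta.
rewrite meval_add meval_tensor meval_msum big_map meval_mono.
under eq_bigr do rewrite meval_tensor meval_add meval_scale meval_mono hornerM.
have [lM | lR] := first_coords Ax.
  by rewrite vanishing_poly_root // !mul0r add0r big1 // => l _; rewrite !mul0r.
rewrite (bigD1_seq lam) //= big1_seq ?addr0; last first.
  by move=> l /andP[/negbTE nl lR']; rewrite lagrange_basisE // eq_sym nl mulr0 mul0r.
have [vG _ _] := G_fibre lR.
rewrite lagrange_basisE // eqxx mulr1 (vG _ fx) mulN1r add0r.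
by rewrite -mulrDr subrr mulr0.
Qed.

Lemma interpolant_LE : is_LE lt interpolant beta.
Proof.
split; first by rewrite coef_interpolant_column // vanishing_poly_lead ?oner_neq0.
move=> a; have [pa | pa] := eqVneq (proj a) (proj beta).
  rewrite coef_interpolant_column // => ha.
  have : (a ord0 < (beta ord0).+1)%N.
    rewrite -(vanishing_poly_size size_M); apply: contraNT ha.
    by rewrite -leqNgt => hs; rewrite nth_default.
  rewrite ltnS leq_eqVlt => /orP[/eqP e | l].
    by left; rewrite -(conse_eta a) -(conse_eta beta) e pa.
  by right; rewrite lt_prod pa eqxx l orbT.
rewrite coef_interpolant (negbTE pa) mulr0 add0r => /sum_neq0 [l [lR _]].
rewrite mulr0 addr0 mulf_eq0 negb_or => /andP[_ hG].
have [_ [_ le] _] := G_fibre lR.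
by case: (le _ hG) => [e | rl]; [rewrite e eqxx in pa | right; rewrite lt_prod rl].
Qed.

End Interpolation.

Lemma Cset_monic (K : fieldType) m (lt : rel (expo m)) (A : 'rV[K]_m -> Prop) (b : expo m) :
  Cset lt A b -> exists f : mpoly K m, [/\ vanishes f A, is_LE lt f b & coef f b = 1].
Proof.
move=> [f [_ fA [fb fle]]]; have fb1 : (coef f b)^-1 * coef f b = 1 by rewrite mulVf.
exists (mscale (coef f b)^-1 f); split=> //.
- by move=> x Ax; rewrite meval_scale fA ?mulr0.
- split=> [|a]; first by rewrite /= fb1 oner_neq0.
  by rewrite /= mulf_eq0 negb_or => /andP[_ /fle].
Qed.

Lemma Cset_of_count_bound (K : fieldType) n (lt : rel (expo n.+1)) (A : 'rV[K]_n.+1 -> Prop)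
    (beta : expo n.+1) (ys M : seq K) :
  product_order lt -> (forall x, A x -> x 0 ord0 \in ys) -> (size M <= beta ord0)%N ->
  (forall l, l \in ys -> l \notin M -> Cset (restr lt) (fiber A l) (proj beta)) ->
  Cset lt A beta.
Proof.
move=> lt_prod hY hM hC.
set R := [seq l <- undup ys | l \notin M].
have uR : uniq R by rewrite filter_uniq ?undup_uniq.
have first_coords x : A x -> x 0 ord0 \in M \/ x 0 ord0 \in R.
  move/hY => xy; case: (boolP (x 0 ord0 \in M)) => xM; [left | right] => //.
  by rewrite mem_filter mem_undup xM.
pose monic_witness l (g : mpoly K n) := [/\ vanishes g (fiber A l),
  is_LE (restr lt) g (proj beta) & coef g (proj beta) = 1].
have [G HG] : exists G, forall l, l \in R -> monic_witness l (G l).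
  apply: (seq_choice (P := monic_witness) (mzero K n)) => l.
  rewrite mem_filter mem_undup => /andP[lM ly].
  exact: Cset_monic (hC l ly lM).
have fLE := interpolant_LE lt_prod hM HG.
exists (interpolant beta M R G); split=> //; last exact: interpolant_vanishes uR first_coords HG.
by exists beta; case: fLE.
Qed.

Lemma filter_prop (T : eqType) (P : T -> Prop) (s : seq T) :
  exists t, uniq t /\ forall x, x \in t <-> x \in s /\ P x.
Proof.
elim: s => [|y s [t [ut ht]]]; first by exists [::]; split=> // x; split=> [|[]].
case: (classic (P y)) => Py.
  exists (undup (y :: t)); split=> [|x]; first exact: undup_uniq.
  rewrite mem_undup !inE.
  split=> [/orP[/eqP -> | /ht[xs Px]] | [/orP[/eqP -> | xs] Px]].
  - by rewrite eqxx.
  - by rewrite xs orbT.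
  - by rewrite eqxx.
  - by apply/orP; right; apply/ht.
exists t; split=> // x; rewrite inE; split=> [/ht[xs Px] | [/orP[/eqP xy | xs] Px]].
- by rewrite xs orbT.
- by case: Py; rewrite -xy.
- exact/ht.
Qed.

Theorem Dset_fibres (K : fieldType) n (lt : rel (expo n.+1)) (A : 'rV[K]_n.+1 -> Prop)
    (Y : K -> Prop) (ys : seq K) :
  irreflexive lt -> product_order lt ->
  (forall lam, Y lam <-> lam \in ys) -> (forall x, A x -> Y (x 0 ord0)) ->
  forall beta : expo n.+1,
    Dset lt A beta <->
    exists N, card_prop (fun lam => Y lam /\ Dset (restr lt) (fiber A lam) (proj beta)) N
              /\ (beta ord0 < N)%N.
Proof.
move=> irr lt_prod Yys AY beta.
have [t [ut ht]] := filter_prop (fun lam => Dset (restr lt) (fiber A lam) (proj beta)) ys.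
split=> [hD | [N [[s [us hs <-]] hlt]] hC].
  exists (size t); split.
    exists t; split=> // lam; rewrite ht.
    by split=> [[/Yys ly hl] | [/Yys ly hl]].
  rewrite ltnNge; apply/negP => t_le; apply: hD.
  apply: (Cset_of_count_bound (ys := ys) lt_prod _ t_le) => [x /AY /Yys // | l ly lt'].
  by apply: NNPP => hD; move/negP: lt'; apply; apply/ht.
have := Cset_count_bound lt_prod irr hC us (fun l ls => proj2 (proj1 (hs l) ls)).
by rewrite leqNgt hlt.
Qed.

Section FreeVariables.
Variable K : fieldType.

Lemma colsub_mul m d p (e : 'I_p -> 'I_m) (B : 'M[K]_(d, m)) (w : 'rV[K]_d) k :
  (w *m colsub e B) 0 k = (w *m B) 0 (e k).
Proof. by rewrite !mxE; apply: eq_bigr => i _; rewrite mxE. Qed.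

Lemma free_of_unit m d (a : 'rV[K]_m) (B : 'M[K]_(d, m)) (e : 'I_d -> 'I_m) :
  injective e -> colsub e B \in unitmx -> free_vars a B (e @: [set: 'I_d]).
Proof.
move=> ei ue; split; first by rewrite card_imset // cardsT card_ord.
move=> y; set BJ := colsub e B.
set z : 'rV_d := \row_k (y 0 (e k) - a 0 (e k)).
have hz k : ((z *m invmx BJ) *m B) 0 (e k) = z 0 k by rewrite -colsub_mul mulmxKV.
exists (a + (z *m invmx BJ) *m B); split.
  split; first by exists (z *m invmx BJ).
  by move=> j /imsetP [k _ ->]; rewrite mxE hz mxE addrC subrK.
move=> x' [[u' ->] hx']; congr (_ + _).
suff <- : u' *m BJ = z by rewrite mulmxK.
apply/rowP => k; rewrite colsub_mul [RHS]mxE.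
have := hx' (e k) (imset_f _ (in_setT k)); rewrite mxE.
by move/(congr1 (fun v => v - a 0 (e k))); rewrite addrC addrK.
Qed.

Lemma unit_of_free m d (a : 'rV[K]_m) (B : 'M[K]_(d, m)) J (e : 'I_d -> 'I_m) :
  row_free B -> free_vars a B J -> {subset J <= codom e} -> colsub e B \in unitmx.
Proof.
move=> rf [_ uniq_pt] se; rewrite unitmxE unitfE; apply/negP => /det0P [w wnz wz].
have [x [_ ux]] := uniq_pt a.
have a_in : in_plane a B a by exists 0; rewrite mul0mx addr0.
have aw_in : in_plane a B (a + w *m B) by exists w.
have xa : x = a by apply: ux.
have xaw : x = a + w *m B.
  apply: ux; split=> // j /se /codomP [k ->].
  by rewrite mxE -colsub_mul wz mxE addr0.
have : w *m B = 0 *m B by rewrite mul0mx; apply: (addrI a); rewrite -xaw xa addr0.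
by move/(row_free_inj rf) => w0; rewrite w0 eqxx in wnz.
Qed.

Lemma enum_set m d (J : {set 'I_m}) : #|J| = d ->
  exists e : 'I_d -> 'I_m, [/\ injective e, forall k, e k \in J & {subset J <= codom e}].
Proof.
move=> <-; exists (fun k => enum_val k); split=> [|k|j jJ]; first exact: enum_val_inj.
  exact: enum_valP.
by apply/codomP; exists (enum_rank_in jJ j); rewrite enum_rankK_in.
Qed.

(* A plane spanned by independent rows has a set of free variables: the
   columns of a maximal invertible minor. *)
Lemma exists_free m d (a : 'rV[K]_m) (B : 'M[K]_(d, m)) :
  row_free B -> exists J, free_vars a B J.
Proof.
move=> rf; have hr : \rank B^T = d by rewrite mxrank_tr; apply/eqP.
move: (maxrowsub_free B^T) (@maxrankfun_inj _ _ _ B^T) hr.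
move: (maxrankfun B^T); generalize (\rank B^T) => r' f ffree finj hr; subst r'.
exists (f @: [set: 'I_d]); apply: free_of_unit => //.
by rewrite -unitmx_tr trmx_mxsub -row_free_unit.
Qed.

Lemma colsub_exchange_unit m d (B : 'M[K]_(d, m)) (e : 'I_d -> 'I_m) k c :
  colsub e B \in unitmx -> (invmx (colsub e B) *m col c B) k 0 != 0 ->
  colsub (fun i => if i == k then c else e i) B \in unitmx.
Proof.
set BJ := colsub e B; set v := invmx BJ *m col c B => uJ vk.
rewrite unitmxE unitfE; apply/negP => /det0P [w wnz wz].
have wz_at i : (w *m B) 0 (if i == k then c else e i) = 0.
  by have := congr1 (fun M : 'rV[K]_d => M 0 i) wz; rewrite colsub_mul => ->; rewrite mxE.
set p := w *m BJ.
have pk i : i != k -> p 0 i = 0 by move=> ik; rewrite colsub_mul -(wz_at i) (negbTE ik).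
have wB : (w *m B) 0 c = p 0 k * v k 0.
  transitivity ((w *m col c B) 0 0); first by rewrite !mxE; apply: eq_bigr => i _; rewrite mxE.
  rewrite -(mulKVmx uJ (col c B)) -/v mulmxA -/p mxE (bigD1 k) //= big1 ?addr0 // => i ik.
  by rewrite pk // mul0r.
have p0 : p = 0.
  apply/rowP => i; rewrite [RHS]mxE; have [-> | ik] := eqVneq i k; last exact: pk.
  by move: (wz_at k); rewrite eqxx wB => /eqP; rewrite mulf_eq0 (negbTE vk) orbF => /eqP.
by move: wnz; rewrite -(mulmxK uJ w) -/p p0 mul0mx eqxx.
Qed.

Lemma exchange_free m d (a : 'rV[K]_m) (B : 'M[K]_(d, m)) J i :
  row_free B -> free_vars a B J -> i \notin J -> (exists k0, B k0 i != 0) ->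
  exists2 j, j \in J & free_vars a B (J :\ j :|: [set i]).
Proof.
move=> rf hf iJ [k0 hk0].
have [e [ei eJ se]] := enum_set (proj1 hf).
have uJ := unit_of_free rf hf se.
set v := invmx (colsub e B) *m col i B.
have [k vk] : exists k, v k 0 != 0.
  apply: NNPP => hn; move/eqP: hk0; apply.
  have := congr1 (fun M : 'cV[K]_d => M k0 0) (mulKVmx uJ (col i B)); rewrite !mxE => <-.
  apply: big1 => l _; have [-> | h] := eqVneq (v l 0) 0; first by rewrite mulr0.
  by case: hn; exists l.
pose e' l := if l == k then i else e l.
have e'i : injective e'.
  move=> l l'; rewrite /e'; case: eqP => [-> | ni]; case: eqP => [-> | ni'] //.
  - by move=> h; move: (eJ l'); rewrite -h (negbTE iJ).
  - by move=> h; move: (eJ l); rewrite h (negbTE iJ).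
  - exact: ei.
exists (e k); first exact: eJ.
suff -> : J :\ e k :|: [set i] = e' @: [set: 'I_d] by apply: free_of_unit; last exact: colsub_exchange_unit.
apply/setP => x; rewrite !inE; apply/idP/imsetP.
- case/orP => [/andP [xk /se /codomP [l xl]] | /eqP ->]; last by exists k; rewrite ?inE /e' ?eqxx.
  exists l => //; rewrite /e' xl; case: eqP => [lk | //].
  by rewrite xl lk eqxx in xk.
- move=> [l _ ->]; rewrite /e'; case: ifP => [_ | /negbT lk]; first by rewrite eqxx orbT.
  by rewrite eJ andbT (inj_eq ei) lk.
Qed.

Definition index_weight m (J : {set 'I_m}) : nat := (\sum_(i in J) (i : nat))%N.

Lemma index_weight_exchange m (J : {set 'I_m}) (i j : 'I_m) :
  j \in J -> i \notin J -> (i < j)%N -> (index_weight (J :\ j :|: [set i]) < index_weight J)%N.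
Proof.
move=> jJ iJ ij; rewrite /index_weight setUC big_setU1 /=; last by rewrite !inE (negbTE iJ) andbF.
by rewrite [X in (_ < X)%N](big_setD1 j jJ) /= ltn_add2r.
Qed.

(* If no minimal set of free variables contains X_1, then X_1 is constant on
   the plane: otherwise exchanging X_1 into a minimal set (or exchanging a
   smaller index into a non-minimal one) would decrease the index weight
   forever. *)
Lemma plane_first_col0 m d (a : 'rV[K]_m.+1) (B : 'M[K]_(d, m.+1)) :
  row_free B -> (forall J, min_free_vars a B J -> ord0 \notin J) -> forall k, B k ord0 = 0.
Proof.
move=> rf hmin k0; apply: NNPP => hk.
have col0_nz : exists k0, B k0 ord0 != 0 by exists k0; apply/eqP.
suff no_free N J : (index_weight J < N)%N -> ~ free_vars a B J.
  by have [J hJ] := exists_free a rf; exact: no_free _ J (ltnSn _) hJ.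
elim: N J => [//|N IH] J; rewrite ltnS => hw hJ.
case: (classic (min_free_vars a B J)) => [hm | hnm].
  have J0 := hmin _ hm; have [j jJ hJ'] := exchange_free rf hJ J0 col0_nz.
  apply: (IH _ _ hJ'); apply: leq_trans hw; apply: index_weight_exchange => //.
  by rewrite lt0n; apply: contraNneq J0 => j0; rewrite (_ : ord0 = j) //; apply: val_inj.
have [j [i [jJ iJ ij hf]]] : exists j i, [/\ j \in J, i \notin J, (i < j)%N &
    free_vars a B (J :\ j :|: [set i])].
  by apply: NNPP => hn; apply: hnm; split => // j i jJ iJ ij hf; apply: hn; exists j, i.
by apply: (IH _ _ hf); apply: leq_trans hw; apply: index_weight_exchange.
Qed.

Lemma union_first_coords m d r (a : 'I_r -> 'rV[K]_m.+1) (B : 'I_r -> 'M[K]_(d, m.+1)) lam :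
  (forall l k, B l k ord0 = 0) ->
  (exists x, (exists l, in_plane (a l) (B l) x) /\ x 0 ord0 = lam) <->
  lam \in [seq a l 0 ord0 | l <- enum 'I_r].
Proof.
move=> col0; split=> [[x [[l [u ->]] <-]] | /mapP [l _ ->]].
  rewrite !mxE big1 ?addr0; first by apply: map_f; rewrite mem_enum.
  by move=> i _; rewrite col0 mulr0.
by exists (a l); split=> //; exists l, 0; rewrite mul0mx addr0.
Qed.

End FreeVariables.

Unset Implicit Arguments.
Theorem mainTheorem5 (K : fieldType) (n : nat) (lt : rel (expo n.+1))
    (d r : nat) (a : 'I_r -> 'rV[K]_n.+1) (B : 'I_r -> 'M[K]_(d, n.+1)) :
  (~ exists s : seq K, forall x : K, x \in s) ->
  (0 < n)%N ->
  term_order lt -> product_order lt ->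
  (forall i j : 'I_n.+1, (i < j)%N -> lt (eunit i) (eunit j)) ->
  (forall l, row_free (B l)) ->
  (forall l l' : 'I_r, l != l' ->
     ~ (forall x, in_plane (a l) (B l) x <-> in_plane (a l') (B l') x)) ->
  (forall (l : 'I_r) (J : {set 'I_n.+1}), min_free_vars (a l) (B l) J -> ord0 \notin J) ->
  let A := fun x : 'rV[K]_n.+1 => exists l, in_plane (a l) (B l) x in
  let Y := fun lam : K => exists x, A x /\ x 0 ord0 = lam in
  forall beta : expo n.+1,
    Dset lt A beta <->
    exists N, card_prop (fun lam => Y lam /\ Dset (restr lt) (fiber A lam) (proj beta)) N
              /\ (beta ord0 < N)%N.
Proof.
move=> _ _ [lt_irr _ _ _ _] lt_prod _ row_free_B _ X1_not_free A Y.
have col0 l : forall k, B l k ord0 = 0 := plane_first_col0 (row_free_B l) (X1_not_free l).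
apply: Dset_fibres lt_irr lt_prod _ _ => [lam | x Ax]; first exact: union_first_coords col0.
by exists x.
Qed.
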